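(* For every integer $n>2$ there exist an integer $N\ge n$ and a probability vector $p=(p_1,\dots,p_N)$ with all $p_k>0$ such that $D(p)<0$.
   Context: For $N\ge2$ and a probability vector $p=(p_1,\dots,p_N)$ with all $p_k>0$, $$D(p)=2\log N+\frac1N\sum_{k=1}^N(\log p_k)^2-\frac1{N^2}\Big(\sum_{k=1}^N\log p_k\Big)^2+\frac2N\sum_{k=1}^N\log p_k,$$ which equals $\lim_{\alpha\to0+}\frac{\partial^2}{\partial\alpha^2}\mathcal H_\alpha(p)$ for the Rényi entropy $\mathcal H_\alpha(p)=\frac1{1-\alpha}\log\sum_k p_k^\alpha$. Logarithms are natural. *)

From mathcomp Require Import all_boot all_order all_algebra.
From mathcomp Require Import all_classical all_reals all_analysis.
Set Implicit Arguments. Unset Strict Implicit. Unset Printing Implicit Defensive.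
Import Order.TTheory GRing.Theory Num.Theory.
Local Open Scope ring_scope.

Definition renyiD (R : realType) (N : nat) (p : 'I_N -> R) : R :=
  2 * ln (N%:R) + (N%:R)^-1 * (\sum_(k < N) (ln (p k)) ^+ 2)
  - (N%:R ^+ 2)^-1 * (\sum_(k < N) ln (p k)) ^+ 2
  + 2 / N%:R * (\sum_(k < N) ln (p k)).

Definition is_pos_prob (R : realType) (N : nat) (p : 'I_N -> R) : Prop :=
  (forall k, 0 < p k) /\ \sum_(k < N) p k = 1.

From mathcomp Require Import all_boot all_order all_algebra.
From mathcomp Require Import all_classical all_reals all_analysis.
From mathcomp Require Import zify ring lra.
Import Order.TTheory GRing.Theory Num.Theory.
Local Open Scope ring_scope.

(* Writing l_k = ln p_k, the quantity D(p) is
     2 ln N + Var(l) + 2 Mean(l),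
   the variance and the mean being taken for the uniform distribution on the
   indices.  For the "two-valued" vector p = (a, b, ..., b) with one entry a
   and M entries b, both are explicit (lemma renyiD_two_valued).
   We take a = 1/2, b = 1/(2M) with M = 2^m: then p is a probability vector,
   ln a - ln b = m ln 2 and Mean(l) = -ln 2 - (M/(M+1)) m ln 2, while
   ln (M+1) <= m ln 2 + 1/M.  The terms of order m ln 2 cancel and
     D(p) <= (2 + 2m + m^2)/2^m - 2 ln 2        (lemma renyiD_dyadic_le).
   Since ln 2 >= 1/2 and 2 + 2m + m^2 < 2^m as soon as m >= 6, choosing
   m = n + 6 gives D(p) < 0 with N = 2^m + 1 >= n entries. *)

Lemma quadratic_lt_pow2 (m : nat) : (6 <= m)%N -> (2 + 2 * m + m ^ 2 < 2 ^ m)%N.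
Proof.
elim: m => // m IH; rewrite leq_eqVlt => /orP[/eqP <- // | m6].
have {IH} := IH m6; rewrite -!mulnn expnS; move: (2 ^ m)%N => pow2m; nia.
Qed.

Section TwoValued.
Variable R : realType.

Definition two_valued (M : nat) (a b : R) : 'I_M.+1 -> R :=
  fun k => if k == ord0 then a else b.

Lemma sum_two_valued (M : nat) (a b : R) (f : R -> R) :
  \sum_(k < M.+1) f (two_valued M a b k) = f a + M%:R * f b.
Proof.
by rewrite big_ord_recl /two_valued eqxx /= sumr_const card_ord mulr_natl.
Qed.

Lemma renyiD_two_valued (M : nat) (a b : R) :
  renyiD (two_valued M a b) =
    2 * ln (M.+1)%:R + M%:R / (M.+1)%:R ^+ 2 * (ln a - ln b) ^+ 2
    + 2 / (M.+1)%:R * (ln a + M%:R * ln b).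
Proof.
rewrite /renyiD (sum_two_valued M a b (fun x => ln x ^+ 2)).
rewrite (sum_two_valued M a b (@ln R)).
have N0 : (M.+1)%:R != 0 :> R by rewrite pnatr_eq0.
by field.
Qed.

Lemma ln2_bounds : 1/2 <= ln (2 : R) <= 1.
Proof.
have ln_half : ln (1/2 : R) = - ln 2 by rewrite mul1r lnV // posrE.
apply/andP; split.
- have := @le_ln1Dx R (- (1/2)) ltac:(lra).
  by rewrite (_ : 1 + - (1/2) = 1/2 :> R) ?ln_half; [lra | field].
- by have := @le_ln1Dx R 1 ltac:(lra); rewrite (_ : 1 + 1 = 2 :> R).
Qed.

Lemma ln_succ_le (x : R) : 0 < x -> ln (x + 1) <= ln x + x^-1.
Proof.
move=> x0; have x0' : x != 0 by rewrite gt_eqF.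
rewrite (_ : x + 1 = x * (1 + x^-1)); last by field.
rewrite lnM ?posrE ?lerD2l ?le_ln1Dx //; last by rewrite addr_gt0 ?invr_gt0.
by apply: lt_le_trans (_ : 0 <= _); rewrite ?invr_ge0 ?ltW ?ltrN10.
Qed.

(* The real-number estimate behind the theorem, with c = ln 2, K = m and
   M = 2^m in mind: the right-hand side of renyiD_two_valued for a = 1/2 and
   b = 1/(2M) is at most (2 + 2K + K^2)/M - 2c, the terms of size K c
   cancelling. *)
Lemma dyadic_estimate (c K M L : R) :
  0 <= c <= 1 -> 0 <= K -> 0 < M -> L <= K * c + M^-1 ->
  2 * L + M / (M + 1) ^+ 2 * (K * c) ^+ 2
    + 2 / (M + 1) * (- c + M * - (c + K * c))
  <= (2 + 2 * K + K ^+ 2) / M - 2 * c.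
Proof.
move=> /andP[c0 c1] K0 M0 hL.
have N0 : 0 < M + 1 by lra.
set u := M^-1; set v := (M + 1)^-1.
have vu : v <= u by rewrite lef_pV2 ?posrE //; lra.
have v0 : 0 < v by rewrite invr_gt0.
have Mv : M * v = 1 - v by rewrite /v; field; rewrite gt_eqF.
have variance_le : M / (M + 1) ^+ 2 * (K * c) ^+ 2 <= K ^+ 2 * u.
  have Kc : (K * c) ^+ 2 <= K ^+ 2 by rewrite exprMn ler_piMr ?sqr_ge0 ?expr_le1.
  rewrite -exprVn -/v (_ : M * v ^+ 2 = (1 - v) * v); last by rewrite -Mv; ring.
  by rewrite mulrC; apply: ler_pM; rewrite ?sqr_ge0 ?mulr_ge0 //; nra.
have mean_eq : 2 / (M + 1) * (- c + M * - (c + K * c)) = - 2 * c - 2 * K * c + 2 * K * c * v.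
  by rewrite /v; field; rewrite gt_eqF.
have mean_le : K * v * c <= K * u.
  have Kv : 0 <= K * v by rewrite mulr_ge0 // ltW.
  apply: le_trans (_ : K * v <= _); first exact: ler_piMr.
  exact: ler_wpM2l.
have -> : (2 + 2 * K + K ^+ 2) / M = 2 * u + 2 * K * u + K ^+ 2 * u by rewrite /u; ring.
rewrite mean_eq; rewrite -/u in hL; lra.
Qed.

Definition dyadic_prob (m : nat) : 'I_(2 ^ m).+1 -> R :=
  two_valued (2 ^ m) (1/2) (2 * (2 ^ m)%:R)^-1.

Lemma dyadic_prob_is_pos_prob (m : nat) : is_pos_prob (dyadic_prob m).
Proof.
have M0 : (0 : R) < (2 ^ m)%:R by rewrite ltr0n expn_gt0.
split=> [k|]; first by rewrite /dyadic_prob /two_valued; case: ifP.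
rewrite /dyadic_prob (sum_two_valued _ _ _ id) /=.
by field; rewrite gt_eqF.
Qed.

Lemma renyiD_dyadic_le (m : nat) :
  renyiD (dyadic_prob m)
  <= (2 + 2 * m%:R + m%:R ^+ 2) / (2 ^ m)%:R - 2 * ln (2 : R).
Proof.
set M : R := (2 ^ m)%:R; set c := ln (2 : R).
have M0 : 0 < M by rewrite ltr0n expn_gt0.
have ln_M : ln M = m%:R * c by rewrite /M natrX lnXn // mulr_natl.
have ln_a : ln (1/2 : R) = - c by rewrite mul1r lnV // posrE.
have ln_b : ln (2 * M)^-1 = - (c + m%:R * c).
  by rewrite lnV ?posrE ?mulr_gt0 // lnM ?posrE // ln_M.
have ln_N : ln (M + 1) <= m%:R * c + M^-1 by rewrite -ln_M ln_succ_le.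
have N_eq : ((2 ^ m).+1)%:R = M + 1 by rewrite -natr1.
rewrite /dyadic_prob renyiD_two_valued N_eq ln_a ln_b.
rewrite (_ : - c - - (c + m%:R * c) = m%:R * c); last by ring.
have c01 : 0 <= c <= 1.
  have /andP[c_ge c_le] := ln2_bounds; rewrite -/c in c_ge c_le.
  by rewrite c_le andbT; lra.
by apply: dyadic_estimate; rewrite ?ler0n.
Qed.

Lemma renyiD_dyadic_neg (m : nat) : (6 <= m)%N -> renyiD (dyadic_prob m) < 0.
Proof.
move=> m6; apply: le_lt_trans (renyiD_dyadic_le m) _.
have small : (2 + 2 * m%:R + m%:R ^+ 2) / (2 ^ m)%:R < (1 : R).
  rewrite ltr_pdivrMr ?ltr0n ?expn_gt0 // mul1r.
  have -> : 2 + 2 * m%:R + m%:R ^+ 2 = (2 + 2 * m + m ^ 2)%N%:R :> R.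
    by rewrite natrD natrD natrM natrX.
  by rewrite ltr_nat quadratic_lt_pow2.
by have /andP[ln2_ge _] := ln2_bounds; lra.
Qed.

End TwoValued.

Theorem mainTheorem4 (R : realType) (n : nat) (hn : (2 < n)%N) :
  exists (N : nat) (p : 'I_N -> R),
    (n <= N)%N /\ is_pos_prob p /\ renyiD p < 0.
Proof.
exists (2 ^ (n + 6)).+1, (dyadic_prob R (n + 6)); split; last split.
- by have := ltn_expl (n + 6) (isT : (1 < 2)%N); lia.
- exact: dyadic_prob_is_pos_prob.
- exact/renyiD_dyadic_neg/leq_addl.
Qed.
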